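(* Let $K$ be an algebraically closed field, $\mathcal{T}$ a $\operatorname{Hom}$-finite Krull–Schmidt triangulated $K$-category with Jacobson radical $\mathcal{J}$, $\mathcal{I}$ an ideal, and $f:X\to Y$ a morphism between indecomposable objects $X$ and $Y$. Then (1) $f$ is left $\mathcal{I}$-irreducible if and only if $f\in\mathcal{I}(X,Y)\setminus(\mathcal{J}\mathcal{I})(X,Y)$; (2) $f$ is right $\mathcal{I}$-irreducible if and only if $f\in\mathcal{I}(X,Y)\setminus(\mathcal{I}\mathcal{J})(X,Y)$; (3) $f$ is $\mathcal{I}$-irreducible if and only if $f\in\mathcal{I}(X,Y)\setminus\big((\mathcal{J}\mathcal{I})(X,Y)\cup(\mathcal{I}\mathcal{J})(X,Y)\big)$.
   Context: Composition of $h_1$ then $h_2$ is $h_2h_1$. An ideal: subgroups $\mathcal{I}(X,Y)\subseteq\operatorname{Hom}(X,Y)$ closed under composition. For ideals $\mathcal{A},\mathcal{B}$, $\mathcal{A}\mathcal{B}$ is the ideal of finite sums of composites $ab$ with $a\in\mathcal{A}$, $b\in\mathcal{B}$ ($b$ applied first). $h$ is left $\mathcal{I}$-irreducible if $h\in\mathcal{I}$ and whenever $h=h_2h_1$ with $h_1\in\mathcal{I}$, $h_2$ is split epic; right $\mathcal{I}$-irreducible if $h\in\mathcal{I}$ and whenever $h=h_2h_1$ with $h_2\in\mathcal{I}$, $h_1$ is split monic; $\mathcal{I}$-irreducible if both. *)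

(* A Hom-finite K-linear category is encoded as a record whose
   Hom-spaces are finite-dimensional K-vector spaces (vectType K). *)
From HB Require Import structures.
From mathcomp Require Import all_boot all_order all_algebra.
Set Implicit Arguments. Unset Strict Implicit. Unset Printing Implicit Defensive.
Import GRing.Theory.
Local Open Scope ring_scope.

(* Composition of h1 then h2 is written comp h2 h1 ("h2 h1"). *)
Record KCategory (K : fieldType) := KCat {
  obj :> Type;
  mor : obj -> obj -> vectType K;
  comp : forall X Y Z : obj, mor Y Z -> mor X Y -> mor X Z;
  idm : forall X : obj, mor X X;
  compA : forall X Y Z W (h : mor Z W) (g : mor Y Z) (f : mor X Y),
      comp h (comp g f) = comp (comp h g) f;
  comp1m : forall X Y (f : mor X Y), comp (idm Y) f = f;
  compm1 : forall X Y (f : mor X Y), comp f (idm X) = f;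
  comp_linl : forall X Y Z (a : K) (g1 g2 : mor Y Z) (f : mor X Y),
      comp (a *: g1 + g2) f = a *: comp g1 f + comp g2 f;
  comp_linr : forall X Y Z (a : K) (g : mor Y Z) (f1 f2 : mor X Y),
      comp g (a *: f1 + f2) = a *: comp g f1 + comp g f2
}.
Arguments mor {K C} : rename.
Arguments comp {K C X Y Z} : rename.
Arguments idm {K C} : rename.

Section CatDefs.
Variables (K : fieldType) (C : KCategory K).

Definition invertible (X Y : C) (f : mor X Y) : Prop :=
  exists g : mor Y X, comp g f = idm X /\ comp f g = idm Y.

Definition split_epi (X Y : C) (f : mor X Y) : Prop :=
  exists s : mor Y X, comp f s = idm Y.

Definition split_mono (X Y : C) (f : mor X Y) : Prop :=
  exists r : mor Y X, comp r f = idm X.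

Definition is_zero_obj (O : C) : Prop := idm O = 0.

Definition is_biproduct (X A B : C) : Prop :=
  exists (p1 : mor X A) (p2 : mor X B) (s1 : mor A X) (s2 : mor B X),
    [/\ comp p1 s1 = idm A, comp p2 s2 = idm B, comp p1 s2 = 0,
        comp p2 s1 = 0 & comp s1 p1 + comp s2 p2 = idm X].

Definition indecomposable (X : C) : Prop :=
  idm X <> 0 /\
  forall A B : C, is_biproduct X A B -> is_zero_obj A \/ is_zero_obj B.

Definition local_end (Z : C) : Prop :=
  idm Z <> 0 /\ forall e : mor Z Z, invertible e \/ invertible (idm Z - e).

Definition krull_schmidt : Prop :=
  forall X : C, exists (n : nat) (Z : 'I_n -> C)
    (p : forall i, mor X (Z i)) (s : forall i, mor (Z i) X),
    [/\ forall i, local_end (Z i),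
        forall i, comp (p i) (s i) = idm (Z i),
        forall i j, i != j -> comp (p i) (s j) = 0
      & \sum_(i < n) comp (s i) (p i) = idm X].

Definition mor_pred := forall X Y : C, mor X Y -> Prop.

Definition is_ideal (I : mor_pred) : Prop :=
  [/\ forall X Y, I X Y 0,
      forall X Y (f g : mor X Y), I X Y f -> I X Y g -> I X Y (f - g),
      forall X Y Z (g : mor Y Z) (f : mor X Y), I X Y f -> I X Z (comp g f)
    & forall X Y Z (g : mor Y Z) (f : mor X Y), I Y Z g -> I X Z (comp g f)].

Definition jacobson_radical : mor_pred :=
  fun X Y f => forall g : mor Y X, invertible (idm X - comp g f).

(* AB: finite sums of composites a b with a in A, b in B (b applied first) *)
Definition ideal_prod (A B : mor_pred) : mor_pred :=
  fun X Y f => exists (n : nat) (Z : 'I_n -> C)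
    (a : forall i, mor (Z i) Y) (b : forall i, mor X (Z i)),
    [/\ forall i, A _ _ (a i), forall i, B _ _ (b i)
      & f = \sum_(i < n) comp (a i) (b i)].

Definition left_irreducible (I : mor_pred) (X Y : C) (f : mor X Y) : Prop :=
  I X Y f /\ forall (Z : C) (h1 : mor X Z) (h2 : mor Z Y),
    f = comp h2 h1 -> I X Z h1 -> split_epi h2.

Definition right_irreducible (I : mor_pred) (X Y : C) (f : mor X Y) : Prop :=
  I X Y f /\ forall (Z : C) (h1 : mor X Z) (h2 : mor Z Y),
    f = comp h2 h1 -> I Z Y h2 -> split_mono h1.

Definition irreducible (I : mor_pred) (X Y : C) (f : mor X Y) : Prop :=
  left_irreducible I f /\ right_irreducible I f.

Variables (shift : C -> C)
          (shiftm : forall X Y : C, mor X Y -> mor (shift X) (shift Y))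
          (dist : forall X Y Z : C,
                    mor X Y -> mor Y Z -> mor Z (shift X) -> Prop).

Definition additive_cat : Prop :=
  (exists O : C, is_zero_obj O) /\ (forall A B : C, exists X, is_biproduct X A B).

Definition shift_ok : Prop :=
  [/\ forall X, shiftm (idm X) = idm (shift X),
      forall X Y Z (g : mor Y Z) (f : mor X Y),
        shiftm (comp g f) = comp (shiftm g) (shiftm f),
      forall X Y (a : K) (f g : mor X Y),
        shiftm (a *: f + g) = a *: shiftm f + shiftm g,
      forall X Y, bijective (@shiftm X Y)
    & forall Y : C, exists X : C, exists f : mor (shift X) Y, invertible f].

Definition tri_mor X Y Z X' Y' Z'
  (u : mor X Y) (v : mor Y Z) (w : mor Z (shift X))
  (u' : mor X' Y') (v' : mor Y' Z') (w' : mor Z' (shift X'))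
  (a : mor X X') (b : mor Y Y') (c : mor Z Z') : Prop :=
  [/\ comp b u = comp u' a, comp c v = comp v' b
    & comp (shiftm a) w = comp w' c].

Definition TR1 : Prop :=
  [/\ (forall X Y Z X' Y' Z' (u : mor X Y) (v : mor Y Z) (w : mor Z (shift X))
          (u' : mor X' Y') (v' : mor Y' Z') (w' : mor Z' (shift X'))
          (a : mor X X') (b : mor Y Y') (c : mor Z Z'),
          dist u v w -> tri_mor u v w u' v' w' a b c ->
          invertible a -> invertible b -> invertible c -> dist u' v' w'),
      (forall (X O : C), is_zero_obj O ->
          dist (idm X) (0 : mor X O) (0 : mor O (shift X)))
    & (forall X Y (u : mor X Y), exists Z (v : mor Y Z) (w : mor Z (shift X)),
          dist u v w)].

Definition TR2 : Prop :=
  forall X Y Z (u : mor X Y) (v : mor Y Z) (w : mor Z (shift X)),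
    dist u v w <-> dist v w (- shiftm u).

Definition TR3 : Prop :=
  forall X Y Z X' Y' Z' (u : mor X Y) (v : mor Y Z) (w : mor Z (shift X))
    (u' : mor X' Y') (v' : mor Y' Z') (w' : mor Z' (shift X'))
    (a : mor X X') (b : mor Y Y'),
    dist u v w -> dist u' v' w' -> comp b u = comp u' a ->
    exists c : mor Z Z', tri_mor u v w u' v' w' a b c.

(* octahedral axiom (as in the Stacks project, Tag 05QK) *)
Definition TR4 : Prop :=
  forall X Y Z Q1 Q2 Q3 (f : mor X Y) (g : mor Y Z)
    (p1 : mor Y Q1) (d1 : mor Q1 (shift X))
    (p2 : mor Z Q2) (d2 : mor Q2 (shift X))
    (p3 : mor Z Q3) (d3 : mor Q3 (shift Y)),
    dist f p1 d1 -> dist (comp g f) p2 d2 -> dist g p3 d3 ->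
    exists (a : mor Q1 Q2) (b : mor Q2 Q3),
      [/\ dist a b (comp (shiftm p1) d3),
          tri_mor f p1 d1 (comp g f) p2 d2 (idm X) g a
        & tri_mor (comp g f) p2 d2 g p3 d3 f (idm Z) b].

Definition is_triangulated : Prop :=
  [/\ additive_cat, shift_ok, TR1, TR2 & (TR3 /\ TR4)].

End CatDefs.

(** A morphism into an object with local endomorphism ring lies in the radical
    exactly when it is not a split epimorphism (dually for morphisms out of such
    an object), and indecomposable objects of a Krull–Schmidt category have
    local endomorphism rings.  In an additive category a finite sum of
    composites [a_i b_i] is a single composite through a biproduct, so [f] lies
    in [JI] iff it factors as [h2 h1] with [h1] in [I] and [h2] in [J], i.e.
    with [h1] in [I] and [h2] not split epi; this is exactly the failure of
    left [I]-irreducibility.  Right irreducibility is dual. *)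
From mathcomp Require Import all_boot all_order all_algebra.
From Stdlib Require Import Classical.
Set Implicit Arguments. Unset Strict Implicit. Unset Printing Implicit Defensive.
Import GRing.Theory.
Local Open Scope ring_scope.

Section KCategoryTheory.
Variables (K : fieldType) (C : KCategory K).
Implicit Types (A B X Y Z : C) (I : mor_pred C).

Lemma compDr X Y Z (g : mor Y Z) (f1 f2 : mor X Y) :
  comp g (f1 + f2) = comp g f1 + comp g f2.
Proof. by have := comp_linr 1 g f1 f2; rewrite !scale1r. Qed.

Lemma compDl X Y Z (g1 g2 : mor Y Z) (f : mor X Y) :
  comp (g1 + g2) f = comp g1 f + comp g2 f.
Proof. by have := comp_linl 1 g1 g2 f; rewrite !scale1r. Qed.

Lemma comp0r X Y Z (g : mor Y Z) : comp g (0 : mor X Y) = 0.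
Proof. by apply/(addrI (comp g 0)); rewrite addr0 -compDr addr0. Qed.

Lemma comp0l X Y Z (f : mor X Y) : comp (0 : mor Y Z) f = 0.
Proof. by apply/(addrI (comp 0 f)); rewrite addr0 -compDl addr0. Qed.

Lemma compNr X Y Z (g : mor Y Z) (f : mor X Y) : comp g (- f) = - comp g f.
Proof. by apply/eqP; rewrite -addr_eq0 -compDr addNr comp0r. Qed.

Lemma compNl X Y Z (g : mor Y Z) (f : mor X Y) : comp (- g) f = - comp g f.
Proof. by apply/eqP; rewrite -addr_eq0 -compDl addNr comp0l. Qed.

Lemma compBr X Y Z (g : mor Y Z) (f1 f2 : mor X Y) :
  comp g (f1 - f2) = comp g f1 - comp g f2.
Proof. by rewrite compDr compNr. Qed.

Lemma compBl X Y Z (g1 g2 : mor Y Z) (f : mor X Y) :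
  comp (g1 - g2) f = comp g1 f - comp g2 f.
Proof. by rewrite compDl compNl. Qed.

Lemma comp_sumr X Y Z (g : mor Y Z) (T : Type) (r : seq T) (P : pred T)
    (F : T -> mor X Y) :
  comp g (\sum_(i <- r | P i) F i) = \sum_(i <- r | P i) comp g (F i).
Proof. exact: (big_morph (comp g) (compDr g) (comp0r _ g)). Qed.

Lemma comp_suml X Y Z (f : mor X Y) (T : Type) (r : seq T) (P : pred T)
    (F : T -> mor Y Z) :
  comp (\sum_(i <- r | P i) F i) f = \sum_(i <- r | P i) comp (F i) f.
Proof. exact: (big_morph (comp^~ f) (fun a b => compDl a b f) (comp0l _ f)). Qed.

Lemma comp4 A B X Y Z (x : mor Y Z) (p : mor X Y) (s : mor B X) (y : mor A B) :
  comp (comp x p) (comp s y) = comp x (comp (comp p s) y).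
Proof. by rewrite !compA. Qed.

Lemma invertible_comp X Y Z (g : mor Y Z) (f : mor X Y) :
  invertible g -> invertible f -> invertible (comp g f).
Proof.
case=> g' [hg1 hg2] [f' [hf1 hf2]]; exists (comp f' g'); split.
- by rewrite compA -(compA f') hg1 compm1.
- by rewrite compA -(compA g) hf2 compm1.
Qed.

Lemma invertible0 X : invertible (0 : mor X X) -> idm X = 0.
Proof. by case=> g [h _]; rewrite -h comp0r. Qed.

(* If [u] inverts [1 - ab] then [1 + b u a] inverts [1 - ba]. *)
Lemma invertible_subC X Y (a : mor X Y) (b : mor Y X) :
  invertible (idm Y - comp a b) -> invertible (idm X - comp b a).
Proof.
case=> u [hu1 hu2]; exists (idm X + comp b (comp u a)); split.
- rewrite compDl comp1m compBr compm1.
  have -> : comp (comp b (comp u a)) (comp b a) = comp b (comp (comp u (comp a b)) a).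
    by rewrite !compA.
  by rewrite -compBr -compBl -{1}[u]compm1 -compBr hu1 comp1m subrK.
- rewrite compDr compm1 compBl comp1m.
  have -> : comp (comp b a) (comp b (comp u a)) = comp b (comp (comp (comp a b) u) a).
    by rewrite !compA.
  by rewrite -compBr -compBl -{1}[u]comp1m -compBl hu2 comp1m subrK.
Qed.

Lemma invertible_conj X Y (p : mor X Y) (s : mor Y X) (e : mor X X) :
  comp s p = idm X -> invertible (comp p (comp e s)) -> invertible e.
Proof.
move=> hsp [u [hu1 hu2]]; exists (comp s (comp u p)); split.
- have -> : comp (comp s (comp u p)) e = comp s (comp (comp u (comp p (comp e s))) p).
    by rewrite !compA -(compA _ s p) hsp compm1.
  by rewrite hu1 comp1m hsp.
- have -> : comp e (comp s (comp u p)) = comp s (comp (comp (comp p (comp e s)) u) p).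
    by rewrite !compA hsp comp1m.
  by rewrite hu2 comp1m hsp.
Qed.

Lemma jacobson_radical0 X Y : jacobson_radical (0 : mor X Y).
Proof. by move=> g; rewrite comp0r subr0; exists (idm X); rewrite comp1m. Qed.

Lemma jacobson_radicalN X Y (f : mor X Y) :
  jacobson_radical f -> jacobson_radical (- f).
Proof. by move=> Jf g; rewrite compNr -compNl; apply: Jf. Qed.

Lemma jacobson_radicalD X Y (f1 f2 : mor X Y) :
  jacobson_radical f1 -> jacobson_radical f2 -> jacobson_radical (f1 + f2).
Proof.
move=> J1 J2 g; have [u [hu1 hu2]] := J1 g.
have -> : idm X - comp g (f1 + f2) =
          comp (idm X - comp g f1) (idm X - comp (comp u g) f2).
  rewrite compBr compm1 compA (compA _ u) hu2 comp1m.
  by rewrite compDr opprD addrA.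
by apply: invertible_comp; [exists u | apply: J2].
Qed.

Lemma jacobson_radical_ideal : is_ideal (@jacobson_radical K C).
Proof.
split=> [X Y|X Y f g Jf Jg|X Y Z g f Jf h|X Y Z g f Jg h].
- exact: jacobson_radical0.
- exact/jacobson_radicalD/jacobson_radicalN.
- by rewrite compA; apply: Jf.
- by rewrite compA; apply: invertible_subC; rewrite compA; apply: Jg.
Qed.

Lemma jacobson_radical_into_local X Y (h : mor X Y) :
  local_end Y -> jacobson_radical h <-> ~ split_epi h.
Proof.
case=> Y0 Yloc; split=> [Jh [s hs] | nsplit g].
  by apply/Y0/invertible0; rewrite -(subrr (idm Y)) -{2}hs; apply/invertible_subC/Jh.
apply: invertible_subC; case: (Yloc (comp h g)) => // -[v [_ hv]].
by case: nsplit; exists (comp g v); rewrite compA.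
Qed.

Lemma jacobson_radical_from_local X Y (h : mor X Y) :
  local_end X -> jacobson_radical h <-> ~ split_mono h.
Proof.
case=> X0 Xloc; split=> [Jh [r hr] | nsplit g].
  by apply/X0/invertible0; rewrite -(subrr (idm X)) -{2}hr; apply: Jh.
case: (Xloc (comp g h)) => // -[v [hv _]].
by case: nsplit; exists (comp v g); rewrite -compA.
Qed.

Lemma idealD I X Y (f g : mor X Y) : is_ideal I -> I X Y f -> I X Y g -> I X Y (f + g).
Proof.
case=> I0 IB _ _ If Ig; have -> : f + g = f - (0 - g) by rewrite sub0r opprK.
exact/IB/IB.
Qed.

Hypothesis C_additive : additive_cat C.

Lemma ideal_prodP I1 I2 X Y (f : mor X Y) : is_ideal I1 -> is_ideal I2 ->
  ideal_prod I1 I2 f <->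
  exists Z (a : mor Z Y) (b : mor X Z), [/\ I1 _ _ a, I2 _ _ b & f = comp a b].
Proof.
move=> I1_ideal I2_ideal; split; last first.
  case=> Z [a [b [Ia Ib ->]]].
  by exists 1%N, (fun _ => Z), (fun _ => a), (fun _ => b); rewrite big_ord1.
have [[O O0] biprod] := C_additive.
have [I10 _ _ I1r] := I1_ideal; have [I20 _ I2l _] := I2_ideal.
case=> n [Z [a [b [Ia Ib ->]]]]; elim: n Z a b Ia Ib => [|n IHn] Z a b Ia Ib.
  by exists O, 0, 0; rewrite big_ord0 comp0l.
(* The first [n] summands factor through some [W], the last one is added
   through the biproduct [W ⊕ Z n]. *)
rewrite big_ord_recr /=.
have [W [a' [b' [Ia' Ib' ->]]]] := IHn (fun i => Z (widen_ord (leqnSn n) i))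
  (fun i => a (widen_ord _ i)) (fun i => b (widen_ord _ i))
  (fun i => Ia _) (fun i => Ib _).
have [V [p1 [p2 [s1 [s2 [ps1 ps2 p1s2 p2s1 _]]]]]] := biprod W (Z ord_max).
exists V, (comp a' p1 + comp (a ord_max) p2), (comp s1 b' + comp s2 (b ord_max)); split.
- by apply: idealD => //; apply: I1r.
- by apply: idealD => //; apply: I2l.
by rewrite compDl !compDr !comp4 ps1 ps2 p1s2 p2s1 !comp0l !comp0r !comp1m addr0 add0r.
Qed.

Lemma left_irreducibleP I X Y (f : mor X Y) : is_ideal I -> local_end Y ->
  left_irreducible I f <-> I X Y f /\ ~ ideal_prod (@jacobson_radical K C) I f.
Proof.
move=> I_ideal Yloc; have J_ideal := jacobson_radical_ideal.
split=> [[If irr] | [If notJI]]; split=> //.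
  case/(ideal_prodP _ J_ideal I_ideal)=> Z [a [b [Ja Ib def_f]]].
  exact: (jacobson_radical_into_local _ Yloc).1 Ja (irr _ _ _ def_f Ib).
move=> Z h1 h2 def_f Ih1; apply: NNPP => not_split; apply: notJI.
apply/(ideal_prodP _ J_ideal I_ideal); exists Z, h2, h1; split=> //.
exact/(jacobson_radical_into_local _ Yloc).
Qed.

Lemma right_irreducibleP I X Y (f : mor X Y) : is_ideal I -> local_end X ->
  right_irreducible I f <-> I X Y f /\ ~ ideal_prod I (@jacobson_radical K C) f.
Proof.
move=> I_ideal Xloc; have J_ideal := jacobson_radical_ideal.
split=> [[If irr] | [If notIJ]]; split=> //.
  case/(ideal_prodP _ I_ideal J_ideal)=> Z [a [b [Ia Jb def_f]]].
  exact: (jacobson_radical_from_local _ Xloc).1 Jb (irr _ _ _ def_f Ia).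
move=> Z h1 h2 def_f Ih2; apply: NNPP => not_split; apply: notIJ.
apply/(ideal_prodP _ I_ideal J_ideal); exists Z, h2, h1; split=> //.
exact/(jacobson_radical_from_local _ Xloc).
Qed.

Definition split_idempotent Y (e : mor Y Y) : Prop :=
  exists B (q : mor Y B) (t : mor B Y), comp q t = idm B /\ comp t q = e.

Lemma split_idempotent0 Y : split_idempotent (0 : mor Y Y).
Proof.
have [[O O0] _] := C_additive.
by exists O, 0, 0; rewrite !comp0l O0.
Qed.

Lemma split_idempotentD Y (e1 e2 : mor Y Y) :
  split_idempotent e1 -> split_idempotent e2 ->
  comp e1 e2 = 0 -> comp e2 e1 = 0 -> split_idempotent (e1 + e2).
Proof.
move=> [B1 [q1 [t1 [qt1 <-]]]] [B2 [q2 [t2 [qt2 <-]]]] e12 e21.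
have q1t2 : comp q1 t2 = 0.
  have -> : comp q1 t2 = comp q1 (comp (comp (comp t1 q1) (comp t2 q2)) t2).
    by rewrite !compA qt1 comp1m -(compA _ q2 t2) qt2 compm1.
  by rewrite e12 comp0l comp0r.
have q2t1 : comp q2 t1 = 0.
  have -> : comp q2 t1 = comp q2 (comp (comp (comp t2 q2) (comp t1 q1)) t1).
    by rewrite !compA qt2 comp1m -(compA _ q1 t1) qt1 compm1.
  by rewrite e21 comp0l comp0r.
have [_ /(_ B1 B2) [V [p1 [p2 [s1 [s2 [ps1 ps2 p1s2 p2s1 sp]]]]]]] := C_additive.
exists V, (comp s1 q1 + comp s2 q2), (comp t1 p1 + comp t2 p2); split.
  by rewrite compDl !compDr !comp4 qt1 qt2 q1t2 q2t1 !comp1m !comp0l !comp0r addr0 add0r.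
by rewrite compDl !compDr !comp4 ps1 ps2 p1s2 p2s1 !comp1m !comp0l !comp0r addr0 add0r.
Qed.

Lemma split_idempotent_sum Y (T : eqType) (r : seq T) (e : T -> mor Y Y) :
  (forall i, split_idempotent (e i)) ->
  (forall i j, i != j -> comp (e i) (e j) = 0) ->
  uniq r -> split_idempotent (\sum_(i <- r) e i).
Proof.
move=> split_e orth_e; elim: r => [_|i r IHr] /=.
  by rewrite big_nil; apply: split_idempotent0.
case/andP=> i_r r_uniq; rewrite big_cons.
apply: split_idempotentD; [exact: split_e | exact: IHr | |].
- rewrite comp_sumr big1_seq // => j /andP[_ j_r]; apply: orth_e.
  by apply: contraNneq _ i_r => ->.
- rewrite comp_suml big1_seq // => j /andP[_ j_r]; apply: orth_e.
  by apply: contraNneq _ i_r => <-.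
Qed.

Lemma biproduct_of_split_idempotents Y B1 B2 (q1 : mor Y B1) (t1 : mor B1 Y)
    (q2 : mor Y B2) (t2 : mor B2 Y) :
  comp q1 t1 = idm B1 -> comp q2 t2 = idm B2 ->
  comp t1 q1 + comp t2 q2 = idm Y -> is_biproduct Y B1 B2.
Proof.
move=> qt1 qt2 tq; exists q1, q2, t1, t2; split=> //.
(* [q1 t2 = q1 (t1 q1 + t2 q2) t2 = q1 t2 + q1 t2], and symmetrically. *)
- apply/(addrI (comp q1 t2)); rewrite addr0 -{3}[t2]comp1m -tq.
  by rewrite compDl compDr -!compA qt2 compm1 compA qt1 comp1m.
- apply/(addrI (comp q2 t1)); rewrite addr0 -{3}[t1]comp1m -tq.
  by rewrite compDl compDr -!compA qt1 compm1 compA qt2 comp1m addrC.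
Qed.

Lemma indecomposable_split_idempotent Y B (q : mor Y B) (t : mor B Y) :
  indecomposable Y -> comp q t = idm B -> idm B <> 0 ->
  split_idempotent (idm Y - comp t q) -> comp t q = idm Y.
Proof.
move=> [_ Yindec] qt B0 [B' [q' [t' [qt' tq']]]].
have Ybi : is_biproduct Y B B'.
  by apply: (biproduct_of_split_idempotents qt qt'); rewrite tq' addrC subrK.
case: (Yindec _ _ Ybi) => [/B0 // | B'0].
by apply/esym/eqP; rewrite -subr_eq0 -tq' -[q']comp1m B'0 comp0l comp0r.
Qed.

Lemma local_end_iso X Y (p : mor X Y) (s : mor Y X) :
  comp p s = idm Y -> comp s p = idm X -> local_end Y -> local_end X.
Proof.
move=> ps sp [Y0 Yloc]; split=> [X0 | e].
  by apply: Y0; rewrite -ps -[s]comp1m X0 comp0l comp0r.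
case: (Yloc (comp p (comp e s))) => [inv_e | inv_1e]; [left | right].
  exact: invertible_conj inv_e.
by apply: (invertible_conj (p := p) sp); rewrite compBl comp1m compBr ps.
Qed.

Hypothesis C_krull_schmidt : krull_schmidt C.

Lemma indecomposable_local_end Y : indecomposable Y -> local_end Y.
Proof.
move=> Yindec; have [Y0 _] := Yindec.
have [n [Z [p [s [Zloc ps orth sp]]]]] := C_krull_schmidt Y.
case: n Z p s Zloc ps orth sp => [|n] Z p s Zloc ps orth sp.
  by rewrite big_ord0 in sp; case: Y0.
have compl : idm Y - comp (s ord0) (p ord0)
             = \sum_(i <- [seq i <- index_enum 'I_n.+1 | i != ord0]) comp (s i) (p i).
  by rewrite big_filter -sp (bigD1 ord0) //= addrC addrK.
have split_compl : split_idempotent (idm Y - comp (s ord0) (p ord0)).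
  rewrite compl; apply: split_idempotent_sum.
  - by move=> i; exists (Z i), (p i), (s i).
  - by move=> i j ij; rewrite comp4 orth // comp0l comp0r.
  - exact/filter_uniq/index_enum_uniq.
have [Z0 _] := Zloc ord0.
have sp0 := indecomposable_split_idempotent Yindec (ps ord0) Z0 split_compl.
exact: local_end_iso (ps ord0) sp0 (Zloc ord0).
Qed.

End KCategoryTheory.

Theorem lemma4p6 (K : closedFieldType) (C : KCategory K)
  (shift : C -> C)
  (shiftm : forall X Y : C, mor X Y -> mor (shift X) (shift Y))
  (dist : forall X Y Z : C, mor X Y -> mor Y Z -> mor Z (shift X) -> Prop)
  (Htri : is_triangulated shiftm dist)
  (HKS : krull_schmidt C)
  (I : mor_pred C) (HI : is_ideal I)
  (X Y : C) (f : mor X Y)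
  (HX : indecomposable X) (HY : indecomposable Y) :
  let J := @jacobson_radical K C in
  [/\ left_irreducible I f <-> I X Y f /\ ~ ideal_prod J I f,
      right_irreducible I f <-> I X Y f /\ ~ ideal_prod I J f
    & irreducible I f <->
        I X Y f /\ ~ (ideal_prod J I f \/ ideal_prod I J f)].
Proof.
move=> J; have [C_additive _ _ _ _] := Htri.
have Xloc := indecomposable_local_end C_additive HKS HX.
have Yloc := indecomposable_local_end C_additive HKS HY.
have left_irr := left_irreducibleP C_additive f HI Yloc.
have right_irr := right_irreducibleP C_additive f HI Xloc.
by split=> //; rewrite /irreducible; tauto.
Qed.
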